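(* Let $u_1=(1,0)$, $u_2=(0,1)$, $u_3=(-1,-1)$ in $\mathbb{Z}^2$, $S=\{u_1,u_2,u_3\}$, $P_{u_i}=P_i$ ($i=1,2,3$) the orthogonal projection of $\mathbb{C}^3$ onto $\mathbb{C}\mathbf{e}_i$, $\mathcal{S}=\sum_{i=1}^3\tau^{u_i}P_{u_i}$ and $G_3=\frac23J-I$ with $J$ the $3\times3$ all-ones matrix. Then the unitary operator $\mathcal{S}^*G_3\mathcal{S}G_3$ on $\ell^2(\mathbb{Z}^2,\mathbb{C}^3)$ has eigenvalue $1$.
   Context: $(\tau^\alpha f)(x)=f(x-\alpha)$ on $\ell^2(\mathbb{Z}^2,\mathbb{C}^3)$; $G_3$ acts pointwise; $\mathbf{e}_1,\mathbf{e}_2,\mathbf{e}_3$ is the standard basis of $\mathbb{C}^3$. Eigenvalue means point spectrum. *)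

From Stdlib Require Import Reals ZArith List.
Open Scope R_scope.

Record Cplx := mkC { re : R; im : R }.
Definition Cadd (a b : Cplx) : Cplx := mkC (re a + re b) (im a + im b).
Definition Csub (a b : Cplx) : Cplx := mkC (re a - re b) (im a - im b).
Definition Cscal (r : R) (a : Cplx) : Cplx := mkC (r * re a) (r * im a).
Definition C0 : Cplx := mkC 0 0.
Definition Cnorm2 (a : Cplx) : R := re a * re a + im a * im a.

Inductive idx3 := i1 | i2 | i3.

Definition C3 := idx3 -> Cplx.
Definition field := (Z * Z)%type -> C3.

Definition u (i : idx3) : Z * Z :=
  match i with i1 => (1, 0)%Z | i2 => (0, 1)%Z | i3 => ((-1), (-1))%Z end.

Definition zadd (a b : Z * Z) : Z * Z := (fst a + fst b, snd a + snd b)%Z.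
Definition zsub (a b : Z * Z) : Z * Z := (fst a - fst b, snd a - snd b)%Z.

Definition tau (alpha : Z * Z) (f : field) : field := fun x => f (zsub x alpha).

Definition Pj (i : idx3) (v : C3) : C3 :=
  fun j => match i, j with
           | i1, i1 | i2, i2 | i3, i3 => v j
           | _, _ => C0 end.

Definition fadd (f g : field) : field := fun x j => Cadd (f x j) (g x j).

Definition Sop (f : field) : field :=
  fadd (tau (u i1) (fun x => Pj i1 (f x)))
    (fadd (tau (u i2) (fun x => Pj i2 (f x)))
          (tau (u i3) (fun x => Pj i3 (f x)))).

(* Its adjoint S^* = sum_i P_{u_i} tau^{-u_i}. *)
Definition Sadj (f : field) : field :=
  fadd (fun x => Pj i1 (f (zadd x (u i1))))
    (fadd (fun x => Pj i2 (f (zadd x (u i2))))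
          (fun x => Pj i3 (f (zadd x (u i3))))).

Definition G3 (v : C3) : C3 :=
  fun j => Csub (Cscal (2/3) (Cadd (v i1) (Cadd (v i2) (v i3)))) (v j).
Definition Gop (f : field) : field := fun x => G3 (f x).

Definition Uop (f : field) : field := Sadj (Gop (Sop (Gop f))).

Definition C3norm2 (v : C3) : R := Cnorm2 (v i1) + Cnorm2 (v i2) + Cnorm2 (v i3).

(* Membership in l^2(Z^2, C^3): the nonnegative family |f(x)|^2 is summable,
   i.e. its sums over finite sets of distinct points are uniformly bounded. *)
Definition in_l2 (f : field) : Prop :=
  exists B : R, forall l : list (Z * Z), NoDup l ->
    fold_right (fun x acc => C3norm2 (f x) + acc) 0 l <= B.

Definition has_eigenvalue_one (T : field -> field) : Prop :=
  exists f : field, in_l2 f /\ (exists x j, f x j <> C0) /\ T f = f.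

(* The vector f with f(u_j) = sum_i a_ij e_i, for the antisymmetric matrix a with
   a_12 = a_23 = a_31 = 1, is a finitely supported eigenvector.  The columns of a sum
   to zero, so f(x) lies in the plane x_1 + x_2 + x_3 = 0, on which G_3 = -1.  The
   i-th component of (S f)(x) is f(x - u_i)_i = sum_j [x = u_i + u_j] a_ij, and the
   condition x = u_i + u_j is symmetric in i, j while a is antisymmetric, so S f takes
   values in that plane as well.  Hence U f = S^* (-1) S (-1) f = S^* S f = f. *)

From Stdlib Require Import Reals ZArith List.
From Stdlib Require Import Lra Lia FunctionalExtensionality.
Open Scope R_scope.

Definition lsum {A : Type} (g : A -> R) (l : list A) : R :=
  fold_right (fun x acc => g x + acc) 0 l.

Section FiniteSums.
Variables (A : Type) (eq_dec : forall x y : A, {x = y} + {x <> y}).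
Variable g : A -> R.
Hypothesis g_ge0 : forall x, 0 <= g x.

Definition drop_all (a : A) (l : list A) : list A :=
  filter (fun y => if eq_dec a y then false else true) l.

Lemma lsum_le_drop_all (a : A) (l : list A) :
  NoDup l -> lsum g l <= g a + lsum g (drop_all a l).
Proof.
  induction 1 as [|x l x_notin_l _ IH]; simpl; [pose proof (g_ge0 a); lra|].
  destruct (eq_dec a x) as [<-|_]; simpl.
  - unfold drop_all; rewrite forallb_filter_id; [lra|].
    apply forallb_forall; intros y y_in.
    destruct (eq_dec a y) as [->|]; [contradiction|reflexivity].
  - lra.
Qed.

Lemma lsum_le_support (s l : list A) :
  NoDup l -> (forall x, In x l -> ~ In x s -> g x = 0) -> lsum g l <= lsum g s.
Proof.
  revert l; induction s as [|a s IH]; intros l nodup_l support.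
  - induction l as [|x l IHl]; simpl; [lra|].
    inversion nodup_l; subst.
    rewrite support by (simpl; tauto).
    assert (lsum g l <= 0) by (apply IHl; auto; intros; apply support; simpl; tauto).
    lra.
  - simpl; eapply Rle_trans; [exact (lsum_le_drop_all a l nodup_l)|].
    apply Rplus_le_compat_l, IH; [now apply NoDup_filter|].
    intros x x_in x_notin; apply filter_In in x_in as [x_in keep].
    destruct (eq_dec a x) as [->|a_neq_x]; [discriminate|].
    apply support; simpl; tauto.
Qed.

End FiniteSums.

Definition zpair_eq_dec : forall x y : Z * Z, {x = y} + {x <> y}.
Proof. decide equality; apply Z.eq_dec. Defined.

Lemma Cnorm2_ge0 (c : Cplx) : 0 <= Cnorm2 c.
Proof. unfold Cnorm2; nra. Qed.

Lemma C3norm2_ge0 (v : C3) : 0 <= C3norm2 v.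
Proof.
  unfold C3norm2.
  pose proof (Cnorm2_ge0 (v i1)); pose proof (Cnorm2_ge0 (v i2)); pose proof (Cnorm2_ge0 (v i3)).
  lra.
Qed.

Lemma in_l2_of_finite_support (f : field) (s : list (Z * Z)) :
  (forall x, ~ In x s -> f x = fun _ => C0) -> in_l2 f.
Proof.
  intros support; exists (lsum (fun x => C3norm2 (f x)) s); intros l nodup_l.
  apply (lsum_le_support _ zpair_eq_dec); [intros; apply C3norm2_ge0|exact nodup_l|].
  intros x _ x_notin; rewrite (support x x_notin).
  unfold C3norm2, Cnorm2, C0; simpl; lra.
Qed.

Lemma Cadd_C0_l (c : Cplx) : Cadd C0 c = c.
Proof. destruct c; unfold Cadd, C0; simpl; f_equal; ring. Qed.

Lemma Cadd_C0_r (c : Cplx) : Cadd c C0 = c.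
Proof. destruct c; unfold Cadd, C0; simpl; f_equal; ring. Qed.

Definition sum3 (v : C3) : Cplx := Cadd (v i1) (Cadd (v i2) (v i3)).

Definition sum_zero (f : field) : Prop := forall x, sum3 (f x) = C0.

Definition fneg (f : field) : field := fun x j => Cscal (-1) (f x j).

Lemma fneg_involutive (f : field) : fneg (fneg f) = f.
Proof.
  apply functional_extensionality; intros x; apply functional_extensionality; intros j.
  unfold fneg, Cscal; destruct (f x j); simpl; f_equal; ring.
Qed.

Lemma sum_zero_fneg (f : field) : sum_zero f -> sum_zero (fneg f).
Proof.
  intros H x; specialize (H x); unfold sum3, fneg, Cadd, Cscal, C0 in *.
  injection H; intros; f_equal; simpl in *; lra.
Qed.

Lemma Gop_sum_zero (f : field) : sum_zero f -> Gop f = fneg f.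
Proof.
  intros H; apply functional_extensionality; intros x; apply functional_extensionality; intros j.
  unfold Gop, G3, fneg; fold (sum3 (f x)); rewrite H.
  unfold Csub, Cscal, C0; simpl; f_equal; ring.
Qed.

Lemma Sop_apply (f : field) x i : Sop f x i = f (zsub x (u i)) i.
Proof.
  destruct i; unfold Sop, fadd, tau, Pj; simpl; now rewrite ?Cadd_C0_l, ?Cadd_C0_r.
Qed.

Lemma Sadj_apply (f : field) x i : Sadj f x i = f (zadd x (u i)) i.
Proof.
  destruct i; unfold Sadj, fadd, Pj; simpl; now rewrite ?Cadd_C0_l, ?Cadd_C0_r.
Qed.

Lemma Sadj_Sop (f : field) : Sadj (Sop f) = f.
Proof.
  apply functional_extensionality; intros [a b]; apply functional_extensionality; intros i.
  rewrite Sadj_apply, Sop_apply; unfold zadd, zsub; simpl; now rewrite !Z.add_simpl_r.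
Qed.

Lemma Sop_fneg (f : field) : Sop (fneg f) = fneg (Sop f).
Proof.
  apply functional_extensionality; intros x; apply functional_extensionality; intros i.
  unfold fneg at 2; now rewrite !Sop_apply.
Qed.

Lemma Uop_fixed_of_sum_zero (f : field) : sum_zero f -> sum_zero (Sop f) -> Uop f = f.
Proof.
  intros Hf HSf; unfold Uop.
  rewrite (Gop_sum_zero f Hf), Sop_fneg, (Gop_sum_zero _ (sum_zero_fneg _ HSf)).
  now rewrite fneg_involutive, Sadj_Sop.
Qed.

Definition rsum3 (h : idx3 -> R) : R := h i1 + h i2 + h i3.

Definition delta (x y : Z * Z) : R := if zpair_eq_dec x y then 1 else 0.

Definition antisymmetric (a : idx3 -> idx3 -> R) : Prop := forall i j, a j i = - a i j.

Definition column_field (a : idx3 -> idx3 -> R) : field :=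
  fun x i => mkC (rsum3 (fun j => delta x (u j) * a i j)) 0.

Lemma rsum3_sym_antisym (w a : idx3 -> idx3 -> R) :
  (forall i j, w i j = w j i) -> antisymmetric a ->
  rsum3 (fun i => rsum3 (fun j => w i j * a i j)) = 0.
Proof.
  intros w_sym a_anti; unfold rsum3.
  rewrite (w_sym i2 i1), (w_sym i3 i1), (w_sym i3 i2),
    (a_anti i1 i2), (a_anti i1 i3), (a_anti i2 i3).
  pose proof (a_anti i1 i1); pose proof (a_anti i2 i2); pose proof (a_anti i3 i3).
  nra.
Qed.

Lemma zsub_eq_sym (x y z : Z * Z) : zsub x y = z -> zsub x z = y.
Proof.
  destruct x, y, z; unfold zsub; simpl; intros H; injection H; intros; f_equal; lia.
Qed.

Lemma sum3_real (h : idx3 -> R) : sum3 (fun i => mkC (h i) 0) = mkC (rsum3 h) 0.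
Proof. unfold sum3, rsum3, Cadd; simpl; f_equal; ring. Qed.

Lemma sum_zero_column_field (a : idx3 -> idx3 -> R) :
  (forall j, rsum3 (fun i => a i j) = 0) -> sum_zero (column_field a).
Proof.
  intros col_sum x; unfold column_field; rewrite sum3_real; unfold C0; f_equal.
  transitivity (rsum3 (fun j => delta x (u j) * rsum3 (fun i => a i j))).
  - unfold rsum3; ring.
  - unfold rsum3 at 1; rewrite !col_sum; ring.
Qed.

Lemma sum_zero_Sop_column_field (a : idx3 -> idx3 -> R) :
  antisymmetric a -> sum_zero (Sop (column_field a)).
Proof.
  intros a_anti x; unfold sum3; rewrite !Sop_apply.
  change (sum3 (fun i => column_field a (zsub x (u i)) i) = C0).
  unfold column_field; rewrite sum3_real; unfold C0; f_equal.
  apply (rsum3_sym_antisym (fun i j => delta (zsub x (u i)) (u j))); [|exact a_anti].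
  intros i j; unfold delta.
  destruct (zpair_eq_dec (zsub x (u i)) (u j)) as [e|],
    (zpair_eq_dec (zsub x (u j)) (u i)) as [e'|]; try reflexivity.
  - now apply zsub_eq_sym in e.
  - now apply zsub_eq_sym in e'.
Qed.

Lemma column_field_support (a : idx3 -> idx3 -> R) x :
  ~ In x (map u (i1 :: i2 :: i3 :: nil)) -> column_field a x = fun _ => C0.
Proof.
  intros x_notin; apply functional_extensionality; intros i.
  unfold column_field, rsum3, delta, C0.
  repeat destruct zpair_eq_dec as [->|]; try (exfalso; apply x_notin, in_map; simpl; tauto).
  f_equal; ring.
Qed.

Definition cyclic3 (i j : idx3) : R :=
  match i, j with
  | i1, i2 | i2, i3 | i3, i1 => 1
  | i2, i1 | i3, i2 | i1, i3 => -1
  | _, _ => 0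
  end.

Lemma cyclic3_antisymmetric : antisymmetric cyclic3.
Proof. intros [] []; simpl; ring. Qed.

Lemma cyclic3_col_sum j : rsum3 (fun i => cyclic3 i j) = 0.
Proof. destruct j; unfold rsum3; simpl; ring. Qed.

Lemma column_field_cyclic3_nonzero : column_field cyclic3 (u i1) i2 <> C0.
Proof.
  unfold column_field, rsum3, delta.
  repeat destruct zpair_eq_dec; try discriminate; try contradiction.
  unfold C0; simpl; intros H; injection H; lra.
Qed.

Theorem corollary5p2 : has_eigenvalue_one Uop.
Proof.
  exists (column_field cyclic3); split; [|split].
  - apply (in_l2_of_finite_support _ _ (column_field_support cyclic3)).
  - exists (u i1), i2; exact column_field_cyclic3_nonzero.
  - apply Uop_fixed_of_sum_zero.
    + exact (sum_zero_column_field cyclic3 cyclic3_col_sum).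
    + exact (sum_zero_Sop_column_field cyclic3 cyclic3_antisymmetric).
Qed.
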